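(* Let $d\ge3$, $h\ge1$ and $0\le n\le h-1$. Then $$|G_{n+1}(d,h)/G_n(d,h)|=\begin{cases}\theta(d,h+1)^{d-1} & \text{if } n=0,\\ \theta(d,h+1-n)^{(d-2)d(d-1)^{n-1}} & \text{if } 1\le n\le h-1,\end{cases}$$ where $\theta(d,m):=\frac{(d-1)^m-1}{d-2}$.
   Context: Let $\mathcal{T}(d,h)$ be the rooted tree in which the root $0$ has $d$ children, every vertex at distance $1,\dots,h-1$ from the root has $d-1$ children, and the vertices at distance $h$ are leaves. Let $V$ be its vertex set, $A$ its adjacency matrix, $\Delta := dI-A$, and $\Lambda\subset\mathbb{Z}^V$ the lattice spanned by the rows of $\Delta$. Then $G(d,h):=\mathbb{Z}^V/\Lambda$; $\{\mathbf{x}_i:i\in V\}$ is the standard basis of $\mathbb{Z}^V$ and $\bar{\mathbf{x}}_i$ is the image of $\mathbf{x}_i$ in $G(d,h)$. For $0\le m\le h$, $G_m(d,h)$ is the subgroup of $G(d,h)$ generated by $\{\bar{\mathbf{x}}_i : i \text{ at distance}\le m\text{ from the root}\}$. *)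

From mathcomp Require Import all_boot all_order all_algebra.
Set Implicit Arguments. Unset Strict Implicit. Unset Printing Implicit Defensive.
Import Order.TTheory GRing.Theory Num.Theory.
Local Open Scope ring_scope.

(* Vertices of T(d,h): a vertex at depth k (0 <= k <= h) is encoded by its
   path of child-labels from the root: (k, f) with f : 'I_h -> 'I_d, where
   f 0 < d (child index of the root's child), f i < d-1 for 1 <= i < k, and
   f i = 0 for i >= k (normalization, so the encoding is unique). *)
Definition vpred (d h : nat) (x : 'I_h.+1 * {ffun 'I_h -> 'I_d}) : bool :=
  [forall i : 'I_h,
     if (i < x.1)%N then ((0 < i)%N ==> (x.2 i < d.-1)%N)
     else (x.2 i == 0 :> nat)].

Definition vert (d h : nat) := {x : 'I_h.+1 * {ffun 'I_h -> 'I_d} | @vpred d h x}.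

Definition depth d h (v : vert d h) : nat := (val v).1.
Definition label d h (v : vert d h) (i : 'I_h) : nat := (val v).2 i.

Definition child d h (x y : vert d h) : bool :=
  (depth y == (depth x).+1) &&
  [forall i : 'I_h, (i < depth x)%N ==> (label y i == label x i)].

Definition adj d h (x y : vert d h) : bool := child x y || child y x.

Definition Delta d h (i j : vert d h) : int :=
  (if i == j then (d%:Z) else 0) - (if adj i j then 1 else 0).

Definition zvec d h := vert d h -> int.

(* Preimage in Z^V of G_m(d,h): the subgroup L_m + Lambda, where L_m is spanned by
   the x_i with depth i <= m, and Lambda is spanned by the rows of Delta.
   v lies in it iff v minus some integer combination of rows of Delta is
   supported on vertices of depth <= m. *)
Definition inGm d h (m : nat) (v : zvec d h) : Prop :=
  exists c : vert d h -> int,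
    forall j, (m < depth j)%N -> v j = \sum_i c i * Delta i j.

(* |H / K| = N for subgroups K <= H of Z^V: there is a transversal of size N,
   i.e. N elements of H, pairwise incongruent mod K, such that every element
   of H is congruent mod K to one of them. *)
Definition quot_card d h (H K : zvec d h -> Prop) (N : nat) : Prop :=
  exists s : 'I_N -> zvec d h,
    (forall k, H (s k)) /\
    (forall k l, K (fun j => s k j - s l j) -> k = l) /\
    (forall v, H v -> exists k, K (fun j => v j - s k j)).

(* theta(d,m) = ((d-1)^m - 1)/(d-2)  (an exact division for d >= 3) *)
Definition theta (d m : nat) : nat := (((d - 1) ^ m - 1) %/ (d - 2))%N.

From mathcomp Require Import all_boot all_order all_algebra.
From mathcomp Require Import zify ring.
Set Implicit Arguments. Unset Strict Implicit. Unset Printing Implicit Defensive.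
Import Order.TTheory GRing.Theory Num.Theory.

(* Write b = d - 1, so that theta(d, m) = 1 + b + ... + b^(m-1) and
   theta(d, m+1) = b theta(d, m) + 1.  Modulo G_n, the group G_(n+1) is generated
   by the x_u with u at depth n+1.  Row p of Delta, for p at depth n, puts the sum of
   the x_u over the children u of p into G_n, so first children can be dropped.
   For u at depth n+1 let w_u(j) = theta(d, h+1-|j|) on the subtree of u and 0
   elsewhere; the recurrence of theta makes w_u Delta-harmonic away from u and its
   parent, and w_u Delta = M x_u - theta(d, h-n) x_(parent u) with M = theta(d, h+1-n).
   Hence M x_u lies in G_n; conversely, pairing any relation z = c Delta (above
   depth n) with w_u gives z_u = -c_(parent u) mod M, so the coefficients of siblings
   agree mod M.  Therefore G_(n+1)/G_n is (Z/M)^S for S the non-first children at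
   depth n+1, and |S| is d-1 when n = 0 and d(d-1)^(n-1)(d-2) otherwise. *)

Section ModularArithmetic.
Local Open Scope ring_scope.

Lemma dvdz_sub_small (a a' m : nat) :
  (a < m)%N -> (a' < m)%N -> (m%:Z %| a%:Z - a'%:Z)%Z -> a = a'.
Proof. by move=> am a'm; rewrite -eqz_mod_dvd !modz_nat !modn_small // => /eqP[]. Qed.

Lemma absz_modz_lt (m : nat) (z : int) : (0 < m)%N -> (`|(z %% m%:Z)%Z| < m)%N.
Proof.
move=> m0; have m0' : m%:Z != 0 by rewrite eqz_nat -lt0n.
by rewrite -ltz_nat gez0_abs ?modz_ge0 ?ltz_pmod ?ltz_nat.
Qed.

End ModularArithmetic.

Lemma card_ord_lt n m : (m <= n)%N -> #|[set a : 'I_n | (a < m)%N]| = m.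
Proof.
move=> mn; have wI : injective (widen_ord mn) by move=> a a' /(congr1 val) E; apply: val_inj.
rewrite -[RHS]card_ord -(card_imset _ wI).
apply: eq_card => a; rewrite inE; apply/idP/imsetP => [am|[c _ ->]]; last exact: (ltn_ord c).
by exists (Ordinal am) => //; apply: val_inj.
Qed.

Section Tree.
Variables k h : nat.
Local Notation b := k.+1.
Local Notation d := k.+2.
Local Notation V := (vert d h).
Implicit Types x y u v : V.

Lemma depth_le v : (depth v <= h)%N.
Proof. by rewrite -ltnS ltn_ord. Qed.

Lemma label_ge_depth v (i : 'I_h) : (depth v <= i)%N -> label v i = 0%N.
Proof. by move=> vi; have /forallP/(_ i) := valP v; rewrite ltnNge vi => /eqP. Qed.

Lemma label_lt v (i : 'I_h) : (0 < i)%N -> (i < depth v)%N -> (label v i < b)%N.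
Proof. by move=> i0 iv; have /forallP/(_ i) := valP v; rewrite iv i0. Qed.

Lemma vert_ext u v : depth u = depth v -> (forall i, label u i = label v i) -> u = v.
Proof.
case: u v => [[a f] ?] [[a' g] ?] e l; apply: val_inj; congr pair; first exact: val_inj.
by apply/ffunP => i; apply: val_inj; exact: l.
Qed.

Definition trunc_val (m : nat) v : 'I_h.+1 * {ffun 'I_h -> 'I_d} :=
  (inord (minn m (depth v)), [ffun i : 'I_h => if (i < m)%N then (val v).2 i else ord0]).

Lemma trunc_val_ok m v : vpred (trunc_val m v).
Proof.
apply/forallP => i /=; rewrite inordK ?ltnS ?geq_min ?depth_le ?orbT // ffunE leq_min.
have /forallP/(_ i) := valP v; rewrite -/(depth v) -/(label v i).
by case: (ltnP i m) => //= _; case: ltnP.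
Qed.

Definition trunc m v : V := exist _ (trunc_val m v) (trunc_val_ok m v).

Lemma depth_trunc m v : depth (trunc m v) = minn m (depth v).
Proof. by rewrite /depth /= inordK // ltnS geq_min depth_le orbT. Qed.

Lemma label_trunc m v i : label (trunc m v) i = if (i < m)%N then label v i else 0%N.
Proof. by rewrite /label /= ffunE; case: ifP. Qed.

Lemma trunc_id m v : (depth v <= m)%N -> trunc m v = v.
Proof.
move=> vm; apply: vert_ext => [|i]; first by rewrite depth_trunc; apply/minn_idPr.
by rewrite label_trunc; case: ltnP => // mi; rewrite label_ge_depth // (leq_trans vm).
Qed.

Lemma trunc_trunc m m' v : trunc m (trunc m' v) = trunc (minn m m') v.
Proof.
apply: vert_ext => [|i]; first by rewrite !depth_trunc minnA.
by rewrite !label_trunc leq_min; case: (i < m)%N; case: (i < m')%N.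
Qed.

Definition parent v := trunc (depth v).-1 v.

Lemma depth_parent v : depth (parent v) = (depth v).-1.
Proof. by rewrite depth_trunc; apply/minn_idPl; rewrite leq_pred. Qed.

Lemma childE x y : child x y = (0 < depth y)%N && (parent y == x).
Proof.
apply/andP/andP => [[/eqP yx /forallP ag]|[y0 /eqP <-]].
  split; first by rewrite yx.
  apply/eqP/vert_ext => [|i]; first by rewrite depth_parent yx.
  rewrite /parent label_trunc yx /=; case: ltnP => [ix|xi]; last by rewrite label_ge_depth.
  by apply/eqP; exact: implyP (ag i) ix.
split; first by rewrite depth_parent prednK.
by apply/forallP => i; apply/implyP => iy; rewrite /parent label_trunc -depth_parent iy.
Qed.

Lemma depth_child x y : child x y -> depth y = (depth x).+1.
Proof. by case/andP => /eqP. Qed.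

Definition ancestor u v := trunc (depth u) v == u.

Lemma ancestor_depth u v : ancestor u v -> (depth u <= depth v)%N.
Proof. by move/eqP=> e; rewrite -{1}e depth_trunc geq_minr. Qed.

Lemma ancestor_refl u : ancestor u u.
Proof. by rewrite /ancestor trunc_id. Qed.

Lemma ancestor_depth_eq u v : ancestor u v -> depth u = depth v -> v = u.
Proof. by move=> /eqP e uv; rewrite -e trunc_id ?uv. Qed.

Lemma ancestor_child u x y : ancestor u x -> child x y -> ancestor u y.
Proof.
rewrite childE /ancestor => ux /andP[_ /eqP e]; have := ancestor_depth ux.
by rewrite -e depth_parent => /minn_idPl ux'; rewrite -{2}(eqP ux) -e trunc_trunc ux'.
Qed.

Lemma ancestor_parent u v : v != u -> ancestor u v -> ancestor u (parent v).
Proof.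
move=> vu uv; have lt : (depth u < depth v)%N.
  by rewrite ltn_neqAle ancestor_depth // andbT; apply: contra vu => /eqP/(ancestor_depth_eq uv)->.
by rewrite /ancestor trunc_trunc; have /minn_idPl -> : (depth u <= (depth v).-1)%N by lia.
Qed.

Lemma ancestor_parentE u v :
  (0 < depth u)%N -> ancestor u v -> ancestor u (parent v) = (v != u).
Proof.
move=> u0 uv; case: eqP => [->|/eqP vu]; last exact: ancestor_parent.
by apply/negbTE/negP => /ancestor_depth; rewrite depth_parent; lia.
Qed.

(* Labels that name no child of [x] are replaced by 0, so that [extend] is total. *)
Definition child_label x (a : 'I_d) : 'I_d :=
  if (depth x == 0%N) || (a < b)%N then a else ord0.

Definition extend_val x (a : 'I_d) : 'I_h.+1 * {ffun 'I_h -> 'I_d} :=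
  (inord (minn (depth x).+1 h),
   [ffun i : 'I_h => if i == depth x :> nat then child_label x a else (val x).2 i]).

Lemma extend_val_ok x a : vpred (extend_val x a).
Proof.
apply/forallP => i /=; rewrite inordK ?ltnS ?geq_minr // ffunE leq_min ltn_ord andbT ltnS.
have /forallP/(_ i) := valP x; rewrite -/(depth x) -/(label x i).
case: (ltngtP i (depth x)) => [ix|xi|ix] /=; rewrite ?ix ?eqxx /child_label //.
move=> _; apply/implyP => x0; case: ifP => // /orP[/eqP x0'|//].
by rewrite x0' in x0.
Qed.

Definition extend x a : V := exist _ (extend_val x a) (extend_val_ok x a).

Lemma label_extend x a i :
  label (extend x a) i = if i == depth x :> nat then (child_label x a : nat) else label x i.
Proof. by rewrite /label /= ffunE; case: ifP. Qed.

Lemma child_extend x a : (depth x < h)%N -> child x (extend x a).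
Proof.
move=> xh; apply/andP; split.
  by rewrite /depth /= inordK ?ltnS ?geq_minr //; apply/eqP/minn_idPl.
by apply/forallP => i; apply/implyP => ix; rewrite label_extend (ltn_eqF ix).
Qed.

Lemma parent_extend x a : (depth x < h)%N -> parent (extend x a) = x.
Proof. by move/(child_extend a); rewrite childE => /andP[_ /eqP]. Qed.

Lemma child_labelE x (a : 'I_d) : (depth x == 0%N) || (a < b)%N -> child_label x a = a.
Proof. by rewrite /child_label => ->. Qed.

Lemma extend_label x y (xh : (depth x < h)%N) :
  child x y -> y = extend x ((val y).2 (Ordinal xh)).
Proof.
move=> xy; have /andP[/eqP yx /forallP ag] := xy.
apply: vert_ext => [|i]; first by rewrite yx (depth_child (child_extend _ xh)).
rewrite label_extend; case: (ltngtP i (depth x)) => [ix|xi|ix].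
- by apply/eqP; exact: implyP (ag i) ix.
- by rewrite !label_ge_depth ?yx // ltnW.
have -> : i = Ordinal xh by apply: val_inj.
rewrite child_labelE //; case: eqP => //= /eqP x0.
by apply: (@label_lt y (Ordinal xh)); rewrite /= ?yx // lt0n.
Qed.

Lemma card_children x : (depth x < h)%N ->
  #|[set y | child x y]| = if depth x == 0%N then d else b.
Proof.
move=> xh.
have -> : [set y | child x y] = extend x @: [set a : 'I_d | (depth x == 0%N) || (a < b)%N].
  apply/setP => y; rewrite inE; apply/idP/imsetP => [xy|[a _ ->]]; last exact: child_extend.
  exists ((val y).2 (Ordinal xh)); last exact: extend_label.
  rewrite inE; case: eqP => //= /eqP x0; have /andP[/eqP yx _] := xy.
  by apply: (@label_lt y (Ordinal xh)); rewrite /= ?yx // lt0n.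
rewrite card_in_imset => [|a a']; last first.
  rewrite !inE => xa xa' /(congr1 (fun y => label y (Ordinal xh))).
  by rewrite !label_extend /= eqxx !child_labelE // => /val_inj.
case: eqP => _ /=; last exact: card_ord_lt.
by rewrite -[RHS](card_ord d); apply: eq_card => a; rewrite inE.
Qed.

Definition first_child x := extend x ord0.

Lemma depth_first_child x : (depth x < h)%N -> depth (first_child x) = (depth x).+1.
Proof. by move/(child_extend ord0)/depth_child. Qed.

Lemma parent_first_child x : (depth x < h)%N -> parent (first_child x) = x.
Proof. exact: parent_extend. Qed.

Lemma root_val_ok : vpred (d := d) (ord0 : 'I_h.+1, [ffun => ord0]).
Proof. by apply/forallP => i; rewrite ffunE. Qed.

Definition root : V := exist _ (ord0, [ffun => ord0]) root_val_ok.

Lemma card_depth_next t (P : pred V) : (t < h)%N ->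
  #|[set y | (depth y == t.+1) && P y]| =
  (\sum_(x | depth x == t) #|[set y | child x y && P y]|)%N.
Proof.
move=> th; rewrite -sum1_card (partition_big parent (fun x => depth x == t)); last first.
  by move=> y; rewrite inE => /andP[/eqP yt _]; rewrite depth_parent yt.
apply: eq_bigr => x /eqP <-; rewrite -sum1_card; apply: eq_bigl => y.
rewrite !inE childE; case: (eqVneq (parent y) x) => [<-|]; last by rewrite !andbF.
by rewrite depth_parent andbT; case: (depth y) => //= n; rewrite eqxx.
Qed.

Lemma card_depth t : (t <= h)%N ->
  #|[set y : V | depth y == t]| = if t == 0%N then 1%N else (d * b ^ t.-1)%N.
Proof.
elim: t => [_|t IH th].
  rewrite -(cards1 root); apply: eq_card => y; rewrite !inE.
  apply/idP/eqP => [/eqP y0|-> //]; apply: vert_ext => [|i]; first by rewrite y0.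
  by rewrite !label_ge_depth ?y0.
rewrite (@eq_card _ _ [set y | (depth y == t.+1) && true]); last by move=> y; rewrite !inE andbT.
rewrite card_depth_next // (eq_bigr (fun _ => if t == 0%N then d else b)); last first.
  by move=> x /eqP xt; rewrite -xt -card_children ?xt //; apply: eq_card => y; rewrite !inE andbT.
rewrite sum_nat_const (@eq_card _ _ [set y : V | depth y == t]) => [|y]; last by rewrite inE.
rewrite IH; last exact: ltnW.
by case: t {IH th} => [|t] /=; rewrite ?mul1n ?expn0 ?muln1 // expnSr mulnA.
Qed.

Fixpoint repunit (m : nat) : nat := if m is m'.+1 then (b * repunit m' + 1)%N else 0%N.

Lemma repunitE m : (b ^ m - 1 = k * repunit m)%N.
Proof.
elim: m => [|m IH]; first by rewrite muln0.
by rewrite expnS [repunit _]/=; have := expn_gt0 b m; nia.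
Qed.

Lemma theta_repunit m : (0 < k)%N -> theta d m = repunit m.
Proof. by move=> k0; rewrite /theta !subSS !subn0 repunitE mulKn. Qed.

Lemma repunit_gt0 m : (0 < repunit m.+1)%N.
Proof. by rewrite /= addn1. Qed.

Local Open Scope ring_scope.

Lemma repunitS m : (repunit m.+1)%:Z = b%:Z * (repunit m)%:Z + 1.
Proof. by rewrite /= PoszD PoszM. Qed.

Lemma Delta_sym x y : Delta x y = Delta y x.
Proof. by rewrite /Delta /adj orbC eq_sym. Qed.

Definition laplacian (f : V -> int) x : int := \sum_y Delta x y * f y.

Lemma parent_not_child x : (0 < depth x)%N -> ~~ child x (parent x).
Proof. by move=> x0; apply/negP => /depth_child; rewrite depth_parent; lia. Qed.

Lemma laplacianE f x :
  laplacian f x = d%:Z * f x - \sum_(y | child x y) f y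
                             - (if (0 < depth x)%N then f (parent x) else 0).
Proof.
have adjE y : adj x y = child x y || (0 < depth x)%N && (y == parent x).
  by rewrite /adj [child y x]childE [parent x == y]eq_sym.
rewrite /laplacian /Delta; under eq_bigr => y _ do rewrite mulrBl adjE.
rewrite sumrB (bigD1 x) //= eqxx big1 => [|y yx]; last by rewrite eq_sym (negbTE yx) mul0r.
rewrite addr0 (bigID (child x)) /= opprD addrA; congr (_ - _ - _).
  by apply: eq_bigr => y ->; rewrite mul1r.
case: (boolP (0 < depth x)%N) => x0; last first.
  by rewrite big1 // => y /negbTE-> /=; rewrite mul0r.
have npx := parent_not_child x0.
rewrite (bigD1 (parent x)) //= (negbTE npx) eqxx mul1r big1 ?addr0 // => y.
by case/andP => /negbTE-> /negbTE->; rewrite mul0r.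
Qed.

Definition rowcomb (c : V -> int) y : int := \sum_x c x * Delta x y.

Lemma rowcomb_laplacian f y : rowcomb f y = laplacian f y.
Proof. by apply: eq_bigr => x _; rewrite mulrC Delta_sym. Qed.

Lemma sum_mul_rowcomb f c : \sum_y f y * rowcomb c y = \sum_x c x * laplacian f x.
Proof.
under eq_bigr => y _ do rewrite mulr_sumr.
rewrite exchange_big; apply: eq_bigr => x _; rewrite mulr_sumr.
by apply: eq_bigr => y _; rewrite mulrCA [f y * _]mulrC.
Qed.

Lemma rowcombD f g y : rowcomb (fun x => f x + g x) y = rowcomb f y + rowcomb g y.
Proof. by rewrite -big_split; apply: eq_bigr => x _; rewrite mulrDl. Qed.

Lemma rowcombB f g y : rowcomb (fun x => f x - g x) y = rowcomb f y - rowcomb g y.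
Proof. by rewrite -sumrB; apply: eq_bigr => x _; rewrite mulrBl. Qed.

Lemma rowcomb_sum (I : finType) (P : pred I) (q : I -> int) (w : I -> V -> int) y :
  rowcomb (fun x => \sum_(i | P i) q i * w i x) y = \sum_(i | P i) q i * rowcomb (w i) y.
Proof.
rewrite /rowcomb; under eq_bigr => x _ do rewrite mulr_suml.
rewrite exchange_big; apply: eq_bigr => i _; rewrite mulr_sumr.
by apply: eq_bigr => x _; rewrite mulrA.
Qed.

Definition weight u y : int :=
  if ancestor u y then (repunit (h.+1 - depth y))%:Z else 0.

Lemma sum_children_weight_in u x : (0 < depth x)%N -> ancestor u x ->
  \sum_(y | child x y) weight u y = b%:Z * (repunit (h - depth x))%:Z.
Proof.
move=> x0 ux; rewrite (eq_bigr (fun=> (repunit (h - depth x))%:Z)) => [|y xy]; last first.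
  by rewrite /weight (ancestor_child ux xy) (depth_child xy) subSS.
rewrite sumr_const -mulr_natl (_ : #|_| = #|[set y | child x y]|) => [|]; last first.
  by apply: eq_card => y; rewrite inE.
have := depth_le x; rewrite leq_eqVlt => /orP[/eqP xh|xh].
  by rewrite (_ : h - depth x = 0)%N ?mulr0 // xh subnn.
by rewrite card_children // gtn_eqF // natz.
Qed.

Lemma sum_children_weight_out u x : (0 < depth u)%N -> ~~ ancestor u x ->
  \sum_(y | child x y) weight u y = if x == parent u then weight u u else 0.
Proof.
move=> u0 ux; rewrite (eq_bigr (fun y => if y == u then weight u u else 0)) => [|y xy]; last first.
  case: eqP => [-> //|/eqP yu]; rewrite /weight; case: ifP => // uy.
  move: (ancestor_parent yu uy); rewrite childE in xy.
  by case/andP: xy => _ /eqP->; rewrite (negbTE ux).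
rewrite big_mkcond (bigD1 u) //= eqxx big1 => [|y /negbTE->]; last by case: ifP.
by rewrite addr0 childE u0 [parent u == x]eq_sym; case: ifP.
Qed.

Lemma laplacian_weight u x : (0 < depth u)%N ->
  laplacian (weight u) x = (if x == u then (repunit (h.+2 - depth u))%:Z else 0)
                           - (if x == parent u then (repunit (h.+1 - depth u))%:Z else 0).
Proof.
move=> u0; rewrite laplacianE; case: (boolP (ancestor u x)) => ux.
  have x0 : (0 < depth x)%N := leq_trans u0 (ancestor_depth ux).
  have xpu : x == parent u = false.
    by apply: contraTF ux => /eqP->; rewrite ancestor_parentE ?ancestor_refl // eqxx.
  rewrite sum_children_weight_in // x0 xpu /weight ancestor_parentE // ux depth_parent.
  have := depth_le x; case: (eqVneq x u) => [->|_] xh /=.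
    have -> : (h.+2 - depth u = (h - depth u).+2)%N by lia.
    have -> : (h.+1 - depth u = (h - depth u).+1)%N by lia.
    by rewrite !repunitS; ring.
  have -> : (h.+1 - (depth x).-1 = (h - depth x).+2)%N by lia.
  have -> : (h.+1 - depth x = (h - depth x).+1)%N by lia.
  by rewrite !repunitS; ring.
have xu : x == u = false by apply: contraNF ux => /eqP->; exact: ancestor_refl.
have -> : (if (0 < depth x)%N then weight u (parent x) else 0) = 0.
  case: ifP => // x0; rewrite /weight; case: ifP => // upx; case/negP: ux.
  by apply: ancestor_child upx _; rewrite childE x0 eqxx.
rewrite sum_children_weight_out // xu /weight (negbTE ux) ancestor_refl.
by case: ifP; rewrite mulr0 !subr0 ?sub0r.
Qed.

Lemma weight_rowcomb u c : (0 < depth u)%N ->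
  \sum_y weight u y * rowcomb c y =
  (repunit (h.+2 - depth u))%:Z * c u - (repunit (h.+1 - depth u))%:Z * c (parent u).
Proof.
move=> u0; rewrite sum_mul_rowcomb.
under eq_bigr => x _ do rewrite laplacian_weight // mulrBr.
have pick z a : \sum_x c x * (if x == z then a else 0) = a * c z.
  by rewrite (bigD1 z) //= eqxx big1 => [|x /negbTE->]; rewrite ?mulr0 ?addr0 // mulrC.
by rewrite sumrB !pick.
Qed.

Lemma inGm_support m (v : zvec d h) : (forall y, (m < depth y)%N -> v y = 0) -> inGm m v.
Proof. by move=> v0; exists (fun=> 0) => y /v0->; rewrite big1 // => x _; rewrite mul0r. Qed.

Section Layer.
Variable n : nat.
Hypothesis nh : (n < h)%N.

Local Notation M := (repunit (h.+1 - n)).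

Lemma M_gt0 : (0 < M)%N.
Proof. by rewrite subSn ?repunit_gt0 // ltnW. Qed.

Lemma rowcomb_weight u y : depth u = n.+1 -> (n < depth y)%N ->
  rowcomb (weight u) y = if y == u then M%:Z else 0.
Proof.
move=> un ny; rewrite rowcomb_laplacian laplacian_weight ?un // subSS.
have -> : (y == parent u) = false.
  by apply: contraTF ny => /eqP->; rewrite depth_parent un ltnn.
by rewrite subr0.
Qed.

Lemma rowcomb_level f y : (forall x, depth x != n -> f x = 0) -> (n < depth y)%N ->
  rowcomb f y = if depth y == n.+1 then - f (parent y) else 0.
Proof.
move=> fn ny; have fy : f y = 0 by apply: fn; rewrite gtn_eqF.
rewrite rowcomb_laplacian laplacianE fy mulr0 sub0r big1 => [|x /depth_child xy]; last first.
  by apply: fn; rewrite xy gtn_eqF // ltnW.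
rewrite oppr0 sub0r (leq_ltn_trans _ ny) //; case: eqP => // /eqP yn.
rewrite fn ?oppr0 // depth_parent; apply: contra yn => /eqP <-.
by rewrite prednK // (leq_ltn_trans _ ny).
Qed.

Lemma rowcomb_dvd c (z : zvec d h) u :
  (forall y, (n < depth y)%N -> z y = rowcomb c y) ->
  (forall y, (n.+1 < depth y)%N -> z y = 0) ->
  depth u = n.+1 -> (M%:Z %| z u + c (parent u))%Z.
Proof.
move=> zc z0 un; have := weight_rowcomb c (u := u); rewrite un => /(_ isT).
rewrite (eq_bigr (fun y => if y == u then weight u u * z u else 0)) => [|y _]; last first.
  case: eqP => [->|/eqP yu]; first by rewrite -zc ?un.
  rewrite /weight; case: ifP => [uy|_]; last by rewrite mul0r.
  rewrite -zc ?z0 ?mulr0 //; last by rewrite -un (ancestor_depth uy).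
  rewrite -un ltn_neqAle ancestor_depth // andbT.
  by apply: contra yu => /eqP/(ancestor_depth_eq uy)->.
rewrite -big_mkcond big_pred1_eq /weight ancestor_refl un !subSS (subSn (ltnW nh)) repunitS.
set A := (repunit (h - n))%:Z => E.
(* [E] says A (z u + c (parent u)) = (b A + 1) c u, and M = b A + 1. *)
apply/dvdzP; exists (z u + c (parent u) - b%:Z * c u).
apply/eqP; rewrite -subr_eq0; apply/eqP.
transitivity (b%:Z * ((b%:Z * A + 1) * c u - A * c (parent u) - A * z u)); first by ring.
by rewrite E subrr mulr0.
Qed.

Definition nonfirst : {set V} :=
  [set y | (depth y == n.+1) && (y != first_child (parent y))].

Definition residues := {ffun {y : V | y \in nonfirst} -> 'I_M}.

Definition residue_vec (f : residues) : zvec d h :=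
  fun y => if insub y is Some s then (f s : nat)%:Z else 0.

Lemma residue_vec_in f y (yS : y \in nonfirst) : residue_vec f y = (f (exist _ y yS) : nat)%:Z.
Proof. by rewrite /residue_vec insubT. Qed.

Lemma residue_vec_out f y : y \notin nonfirst -> residue_vec f y = 0.
Proof. by move=> yS; rewrite /residue_vec insubF //; apply/negbTE. Qed.

Lemma residue_vec_deep f y : (n.+1 < depth y)%N -> residue_vec f y = 0.
Proof. by move=> ny; rewrite residue_vec_out // inE gtn_eqF. Qed.

Lemma residue_vec_inj f g :
  inGm n (fun y => residue_vec f y - residue_vec g y) -> f = g.
Proof.
case=> c zc; apply/ffunP => s; apply: val_inj.
pose z y := residue_vec f y - residue_vec g y.
have {}zc : forall y, (n < depth y)%N -> z y = rowcomb c y := zc.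
have z0 y : (n.+1 < depth y)%N -> z y = 0 by move=> ny; rewrite /z !residue_vec_deep ?subrr.
have /[dup] sS : val s \in nonfirst := valP s.
rewrite inE => /andP[/eqP un _]; set p := parent (val s).
have pn : depth p = n by rewrite depth_parent un.
have fn : depth (first_child p) = n.+1 by rewrite depth_first_child pn.
have := rowcomb_dvd zc z0 fn; rewrite parent_first_child ?pn // {1}/z.
rewrite !residue_vec_out ?inE ?parent_first_child ?pn ?eqxx ?andbF // subrr add0r.
move=> /(rpredB (rowcomb_dvd zc z0 un)); rewrite addrK /z !(residue_vec_in _ sS).
have -> : exist _ (val s) sS = s by apply: val_inj.
exact: dvdz_sub_small.
Qed.

Lemma rowcomb_weights (q : V -> int) y : (n < depth y)%N ->
  rowcomb (fun x => \sum_(u in nonfirst) q u * weight u x) y =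
  if y \in nonfirst then q y * M%:Z else 0.
Proof.
move=> ny; rewrite rowcomb_sum (eq_bigr (fun u => if u == y then q u * M%:Z else 0)) => [|u].
  rewrite -big_mkcondr /=; case: (boolP (y \in nonfirst)) => yS.
    by rewrite (big_pred1 y) // => u /=; case: (eqVneq u y) => [->|_]; rewrite ?yS ?andbF.
  by rewrite big_pred0 // => u; case: (eqVneq u y) => [->|_]; rewrite ?(negbTE yS) ?andbF.
by rewrite inE => /andP[/eqP un _]; rewrite rowcomb_weight // eq_sym; case: eqP; rewrite ?mulr0.
Qed.

Lemma residue_vec_cover (w : zvec d h) :
  inGm n.+1 w -> exists f, inGm n (fun y => w y - residue_vec f y).
Proof.
case=> c wc; pose r y := w y - rowcomb c y.
have r0 y : (n.+1 < depth y)%N -> r y = 0 by move=> /wc; rewrite /r => ->; rewrite subrr.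
pose dd u := r u - r (first_child (parent u)).
pose f : residues := [ffun s => Ordinal (absz_modz_lt (dd (val s)) M_gt0)].
(* The rows of the depth-n vertices x, with coefficients r (first_child x), clear the
   first children; the weights then reduce the other entries of r modulo M. *)
pose carry x := if depth x == n then r (first_child x) else 0.
pose c' x := c x + \sum_(u in nonfirst) (dd u %/ M)%Z * weight u x - carry x.
exists f, c' => y ny; rewrite -/(rowcomb c' y) rowcombB rowcombD rowcomb_weights //.
rewrite (rowcomb_level (f := carry)) // => [|x]; last by rewrite /carry; case: eqP.
case: (ltngtP (depth y) n.+1) => [|deep|yn]; first by rewrite ltnS leqNgt ny.
  have yS : y \notin nonfirst by rewrite inE gtn_eqF.
  rewrite residue_vec_out // (negbTE yS).
  by have := r0 _ deep; rewrite /r => /eqP; rewrite subr_eq0 => /eqP->; rewrite !(addr0, subr0).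
rewrite /carry depth_parent yn eqxx.
case: (boolP (y \in nonfirst)) => yS.
  rewrite residue_vec_in ffunE /= gez0_abs ?modz_ge0 ?eqz_nat -?lt0n ?M_gt0 //.
  by have := divz_eq (dd y) M; rewrite /dd /r; lia.
rewrite residue_vec_out // addr0 opprK subr0 /r.
have <- : y = first_child (parent y) by move: yS; rewrite inE yn eqxx negbK => /eqP.
by rewrite addrC subrK.
Qed.

Lemma quot_card_residues : quot_card (@inGm d h n.+1) (@inGm d h n) #|{: residues}|.
Proof.
exists (fun i => residue_vec (enum_val i)); split; [|split].
- by move=> i; apply: inGm_support => y /residue_vec_deep.
- by move=> i j /residue_vec_inj /enum_val_inj.
- by move=> w /residue_vec_cover[f wf]; exists (enum_rank f); rewrite enum_rankK.
Qed.

Lemma card_nonfirst : #|nonfirst| = if n == 0%N then b else (d * b ^ n.-1 * k)%N.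
Proof.
rewrite card_depth_next // (eq_bigr (fun=> if n == 0%N then b else k)) => [|x /eqP xn].
  rewrite sum_nat_const (@eq_card _ _ [set x : V | depth x == n]) => [|x]; last by rewrite inE.
  by rewrite card_depth; [case: (n == 0%N); rewrite ?mul1n | exact: ltnW].
have xh : (depth x < h)%N by rewrite xn.
have -> : [set y | child x y & y != first_child (parent y)] = [set y | child x y] :\ first_child x.
  apply/setP => y; rewrite !inE andbC; case: (boolP (child x y)) => xy; rewrite ?andbF //.
  by move: xy; rewrite childE => /andP[_ /eqP->].
have := cardsD1 (first_child x) [set y | child x y].
by rewrite inE child_extend // card_children // xn; case: (n == 0%N) => /= E; lia.
Qed.

Lemma card_residues : #|{: residues}| = (M ^ #|nonfirst|)%N.
Proof. by rewrite card_ffun card_ord card_sig; apply: congr1; apply: eq_card. Qed.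

End Layer.

End Tree.

Theorem lemma8p17 (d h n : nat) :
  (3 <= d)%N -> (1 <= h)%N -> (n <= h - 1)%N ->
  quot_card (@inGm d h n.+1) (@inGm d h n)
    (if n == 0%N then (theta d h.+1 ^ (d - 1))%N
     else (theta d (h.+1 - n) ^ ((d - 2) * d * (d - 1) ^ (n - 1)))%N).
Proof.
case: d => [|[|[|k]]] // _ h0 nh; have {h0} nh : (n < h)%N by lia.
set N := (if _ then _ else _).
suff -> : N = #|{: residues k.+1 h n}| by exact: quot_card_residues.
rewrite /N card_residues card_nonfirst // !theta_repunit //.
case: eqP => [->|_]; first by rewrite subn0.
by rewrite !subSS !subn0 subn1 [(k.+1 * _)%N]mulnC mulnAC.
Qed.
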